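(* Let $\mathbb{D}$ be $[0,1]^2$ or a mesh and let $A,B:\mathbb{D}\to\mathbb{R}$ satisfy (Q1) $A\le B$ and (Q2) $L^{(A,B)}(R)\ge0$ for all $R\in\mathfrak{R}$. Then for all $\mathbf{x}\in\mathbb{D}$, $$P_M^{(A,B)}(\mathbf{x})+P_O^{(A,B)}(\mathbf{x})\ge B(\mathbf{x})-A(\mathbf{x}).$$
   Context: A rectangle is $[s_1,s_2]\times[t_1,t_2]$ with $s_1<s_2$, $t_1<t_2$ and corners in $\mathbb{D}$; main corners: southwest and northeast; opposite corners: southeast and northwest. $\mathfrak{R}$ is the set of finite formal unions $R=R_1\sqcup\dots\sqcup R_n$ of rectangles (repetitions allowed), with multiplicity $m_R(\mathbf{y})=\sum_i m_{R_i}(\mathbf{y})$, where $m_{R_i}(\mathbf{y})$ is $1$ at main corners, $-1$ at opposite corners, $0$ elsewhere. $L^{(A,B)}(R)=\sum_{m_R(\mathbf{y})>0}B(\mathbf{y})m_R(\mathbf{y})+\sum_{m_R(\mathbf{y})<0}A(\mathbf{y})m_R(\mathbf{y})$; $P_M^{(A,B)}(\mathbf{x})=\inf\{L^{(A,B)}(R)/m_R(\mathbf{x}):m_R(\mathbf{x})>0\}$; $P_O^{(A,B)}(\mathbf{x})=\inf\{L^{(A,B)}(R)/(-m_R(\mathbf{x})):m_R(\mathbf{x})<0\}$, infima over $R\in\mathfrak{R}$ and $\inf\emptyset=+\infty$. *)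

From Stdlib Require Import Reals Lra List Classical ClassicalEpsilon.
Import ListNotations.
Open Scope R_scope.

Definition pt := (R * R)%type.

Definition pt_eq_dec : forall x y : pt, {x = y} + {x <> y}.
Proof.
  intros [a b] [c d].
  destruct (Req_EM_T a c) as [H1|H1]; destruct (Req_EM_T b d) as [H2|H2];
    subst; auto; right; intros H; inversion H; auto.
Defined.

Definition unit_square (p : pt) : Prop :=
  0 <= fst p <= 1 /\ 0 <= snd p <= 1.

Definition is_mesh (D : pt -> Prop) : Prop :=
  exists l1 l2 : list R,
    (forall s, In s l1 -> 0 <= s <= 1) /\ In 0 l1 /\ In 1 l1 /\
    (forall t, In t l2 -> 0 <= t <= 1) /\ In 0 l2 /\ In 1 l2 /\
    (forall p : pt, D p <-> (In (fst p) l1 /\ In (snd p) l2)).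

Definition square_or_mesh (D : pt -> Prop) : Prop :=
  (forall p, D p <-> unit_square p) \/ is_mesh D.

Record rect := mkRect { rs1 : R; rs2 : R; rt1 : R; rt2 : R }.

Definition rect_ok (D : pt -> Prop) (r : rect) : Prop :=
  rs1 r < rs2 r /\ rt1 r < rt2 r /\
  D (rs1 r, rt1 r) /\ D (rs2 r, rt2 r) /\ D (rs2 r, rt1 r) /\ D (rs1 r, rt2 r).

(* Formal unions of rectangles (repetitions allowed) *)
Definition runion := list rect.

Definition runion_ok (D : pt -> Prop) (Rs : runion) : Prop := Forall (rect_ok D) Rs.

Definition m_rect (r : rect) (y : pt) : R :=
  if pt_eq_dec y (rs1 r, rt1 r) then 1
  else if pt_eq_dec y (rs2 r, rt2 r) then 1
  else if pt_eq_dec y (rs2 r, rt1 r) then -1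
  else if pt_eq_dec y (rs1 r, rt2 r) then -1
  else 0.

Definition mult (Rs : runion) (y : pt) : R :=
  fold_right (fun r acc => m_rect r y + acc) 0 Rs.

Definition corners (r : rect) : list pt :=
  [(rs1 r, rt1 r); (rs2 r, rt2 r); (rs2 r, rt1 r); (rs1 r, rt2 r)].

(* All points where some rectangle of the union has a corner (without
   duplicates); m_R vanishes off this finite set. *)
Definition all_corners (Rs : runion) : list pt :=
  nodup pt_eq_dec (flat_map corners Rs).

Definition Lterm (A B : pt -> R) (Rs : runion) (y : pt) : R :=
  let m := mult Rs y in
  if Rlt_dec 0 m then B y * m
  else if Rlt_dec m 0 then A y * m
  else 0.

Definition L (A B : pt -> R) (Rs : runion) : R :=
  fold_right (fun y acc => Lterm A B Rs y + acc) 0 (all_corners Rs).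

(* Extended reals, for infima (inf of the empty set = +infinity) *)
Inductive Rbar := Fin (r : R) | PInf | MInf.

Definition Rbar_le (a b : Rbar) : Prop :=
  match a, b with
  | MInf, _ => True
  | _, PInf => True
  | Fin x, Fin y => x <= y
  | _, _ => False
  end.

(* addition; +infinity absorbs (the case +inf + -inf does not occur under
   the hypotheses of the theorem, since then all infima are >= 0) *)
Definition Rbar_plus (a b : Rbar) : Rbar :=
  match a, b with
  | PInf, _ | _, PInf => PInf
  | MInf, _ | _, MInf => MInf
  | Fin x, Fin y => Fin (x + y)
  end.

Definition is_inf (S : R -> Prop) (l : Rbar) : Prop :=
  (forall x, S x -> Rbar_le l (Fin x)) /\
  (forall l', (forall x, S x -> Rbar_le l' (Fin x)) -> Rbar_le l' l).

(* the infimum, chosen classically (it exists by completeness of R) *)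
Definition Inf (S : R -> Prop) : Rbar :=
  epsilon (inhabits PInf) (is_inf S).

Definition P_M (D : pt -> Prop) (A B : pt -> R) (x : pt) : Rbar :=
  Inf (fun v => exists Rs, runion_ok D Rs /\ 0 < mult Rs x /\
                            v = L A B Rs / mult Rs x).

Definition P_O (D : pt -> Prop) (A B : pt -> R) (x : pt) : Rbar :=
  Inf (fun v => exists Rs, runion_ok D Rs /\ mult Rs x < 0 /\
                            v = L A B Rs / (- mult Rs x)).

From Stdlib Require Import Reals List Lra ZArith Classical ClassicalEpsilon.
Open Scope R_scope.

(* The contribution of a point y to L^{(A,B)}(R) is
   corner_cost(A y, B y, m_R(y)), where corner_cost(a,b,m) = b m for m > 0
   and a m for m <= 0.  For a <= b the map m |-> corner_cost(a,b,m) is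
   positively homogeneous and
   subadditive.  Consequently, for unions R1, R2:
   - L(n copies of R) = n L(R);
   - if m_{R1}(x) + m_{R2}(x) = 0 with m_{R1}(x) > 0, then
       L(R1 ⊔ R2) <= L(R1) + L(R2) - (B x - A x) m_{R1}(x),
     since the cancellation at x saves exactly (B x - A x) m_{R1}(x).
   Given R1 with m_{R1}(x) = p > 0 and R2 with m_{R2}(x) = -q < 0 (p, q are
   integers), the union of q copies of R1 and p copies of R2 has zero
   multiplicity at x, so (Q2) yields q L(R1) + p L(R2) >= p q (B x - A x),
   i.e. L(R1)/p + L(R2)/q >= B x - A x.  Passing to infima (in the extended
   reals, with empty infima equal to +oo) gives the theorem.  The argument
   works for every domain D. *)

Definition sum_over (f : pt -> R) (l : list pt) : R :=
  fold_right (fun y acc => f y + acc) 0 l.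

Lemma sum_over_zero f l : (forall y, In y l -> f y = 0) -> sum_over f l = 0.
Proof.
  induction l as [|a l IH]; simpl; intros H; auto.
  rewrite H, IH; auto; lra.
Qed.

Lemma sum_over_add f g l :
  sum_over (fun y => f y + g y) l = sum_over f l + sum_over g l.
Proof. induction l as [|a l IH]; simpl; [lra|]. rewrite IH; lra. Qed.

Lemma sum_over_scale k f l : sum_over (fun y => k * f y) l = k * sum_over f l.
Proof. induction l as [|a l IH]; simpl; [lra|]. rewrite IH; lra. Qed.

Lemma sum_over_ext f g l :
  (forall y, In y l -> f y = g y) -> sum_over f l = sum_over g l.
Proof.
  induction l as [|a l IH]; simpl; intros H; auto.
  rewrite H, IH; auto.
Qed.

Lemma sum_over_le f g l :
  (forall y, In y l -> f y <= g y) -> sum_over f l <= sum_over g l.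
Proof.
  induction l as [|a l IH]; simpl; intros H; [lra|].
  pose proof (H a (or_introl eq_refl)).
  assert (sum_over f l <= sum_over g l) by (apply IH; auto). lra.
Qed.

Lemma sum_over_remove f l a : NoDup l -> In a l ->
  sum_over f l = f a + sum_over f (remove pt_eq_dec a l).
Proof.
  induction 1 as [|x l Hx Hl IH]; simpl; intros Ha; [contradiction|].
  destruct (pt_eq_dec a x) as [<-|Hne].
  - rewrite notin_remove; auto.
  - destruct Ha as [->|Ha]; [congruence|]. simpl. rewrite IH; auto. lra.
Qed.

Lemma sum_over_indicator (x : pt) c l : NoDup l -> In x l ->
  sum_over (fun y => if pt_eq_dec y x then c else 0) l = c.
Proof.
  intros Hl Hx. rewrite (sum_over_remove _ l x Hl Hx), sum_over_zero.
  - destruct (pt_eq_dec x x); [lra|congruence].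
  - intros y Hy. apply in_remove in Hy. destruct (pt_eq_dec y x); tauto.
Qed.

Lemma NoDup_remove_pt (l : list pt) a : NoDup l -> NoDup (remove pt_eq_dec a l).
Proof.
  induction 1 as [|x l Hx Hl IH]; simpl; [constructor|].
  destruct (pt_eq_dec a x); auto.
  constructor; auto. intros Hin; apply in_remove in Hin; tauto.
Qed.

Lemma sum_over_support f l1 l2 : NoDup l1 -> NoDup l2 -> incl l1 l2 ->
  (forall y, In y l2 -> ~ In y l1 -> f y = 0) -> sum_over f l1 = sum_over f l2.
Proof.
  intros H1; revert l2.
  induction H1 as [|a l1 Ha H1 IH]; intros l2 H2 Hincl Hzero; simpl.
  - symmetry; apply sum_over_zero; auto.
  - rewrite (sum_over_remove f l2 a H2) by (apply Hincl; simpl; auto).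
    f_equal. apply IH.
    + apply NoDup_remove_pt; auto.
    + intros y Hy. apply in_in_remove; [intros ->; contradiction|].
      apply Hincl; simpl; auto.
    + intros y Hy Hn. apply in_remove in Hy as [Hy Hne].
      apply Hzero; auto. simpl; intros [->|?]; auto.
Qed.

Definition corner_cost (a b m : R) : R :=
  if Rlt_dec 0 m then b * m else if Rlt_dec m 0 then a * m else 0.

Lemma Lterm_corner_cost A B Rs y :
  Lterm A B Rs y = corner_cost (A y) (B y) (mult Rs y).
Proof. reflexivity. Qed.

Lemma corner_cost_zero a b : corner_cost a b 0 = 0.
Proof. unfold corner_cost; destruct (Rlt_dec 0 0); [lra|]; destruct (Rlt_dec 0 0); lra. Qed.

Lemma corner_cost_scale a b k m :
  0 <= k -> corner_cost a b (k * m) = k * corner_cost a b m.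
Proof.
  intros Hk; destruct (Rle_lt_or_eq_dec 0 k Hk) as [Hk'|<-].
  - unfold corner_cost.
    destruct (Rlt_dec 0 (k*m)); destruct (Rlt_dec 0 m);
    destruct (Rlt_dec (k*m) 0); destruct (Rlt_dec m 0); nra.
  - rewrite Rmult_0_l, corner_cost_zero; lra.
Qed.

(* For a <= b, corner_cost is subadditive in m (it is the maximum of the
   linear maps a m and b m). *)
Lemma corner_cost_subadditive a b u v : a <= b ->
  corner_cost a b (u + v) <= corner_cost a b u + corner_cost a b v.
Proof.
  intros Hab.
  assert (Hmax : forall m, corner_cost a b m = Rmax (a * m) (b * m)).
  { intros m; unfold corner_cost.
    destruct (Rlt_dec 0 m); [rewrite Rmax_right; nra|].
    destruct (Rlt_dec m 0); [rewrite Rmax_left; nra|].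
    replace m with 0 by lra; rewrite !Rmult_0_r, Rmax_left; lra. }
  rewrite !Hmax; apply Rmax_lub.
  - pose proof (Rmax_l (a * u) (b * u)); pose proof (Rmax_l (a * v) (b * v)); nra.
  - pose proof (Rmax_r (a * u) (b * u)); pose proof (Rmax_r (a * v) (b * v)); nra.
Qed.

Lemma mult_app R1 R2 y : mult (R1 ++ R2) y = mult R1 y + mult R2 y.
Proof.
  induction R1 as [|r R1 IH]; simpl; [lra|].
  unfold mult in *; simpl; rewrite IH; lra.
Qed.

Fixpoint repeat_union (n : nat) (Rs : runion) : runion :=
  match n with O => nil | S k => Rs ++ repeat_union k Rs end.

Lemma mult_repeat_union n Rs y : mult (repeat_union n Rs) y = INR n * mult Rs y.
Proof.
  induction n as [|n IH]; simpl repeat_union.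
  - unfold mult; simpl; lra.
  - rewrite mult_app, IH, S_INR; lra.
Qed.

Lemma repeat_union_ok D n Rs : runion_ok D Rs -> runion_ok D (repeat_union n Rs).
Proof.
  intros H; induction n as [|n IH]; simpl; [constructor|].
  apply Forall_app; auto.
Qed.

Lemma mult_integer Rs y : exists z, mult Rs y = IZR z.
Proof.
  induction Rs as [|r Rs [z Hz]]; [exists 0%Z; reflexivity|].
  unfold mult in *; simpl; rewrite Hz; unfold m_rect.
  repeat destruct (pt_eq_dec _ _);
    solve [exists (1 + z)%Z; rewrite plus_IZR; reflexivity
          | exists (-1 + z)%Z; rewrite plus_IZR; reflexivity
          | exists z; lra].
Qed.

Lemma nonneg_integer_nat z : 0 <= IZR z -> exists n : nat, IZR z = INR n.
Proof.
  intros Hz; apply le_IZR in Hz. exists (Z.to_nat z).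
  rewrite INR_IZR_INZ, Z2Nat.id; auto.
Qed.

Lemma positive_mult_nat Rs y : 0 < mult Rs y -> exists n : nat, mult Rs y = INR n.
Proof.
  destruct (mult_integer Rs y) as [z Hz]; rewrite Hz; intros Hpos.
  apply nonneg_integer_nat; lra.
Qed.

Lemma negative_mult_nat Rs y : mult Rs y < 0 -> exists n : nat, - mult Rs y = INR n.
Proof.
  destruct (mult_integer Rs y) as [z Hz]; rewrite Hz, <- opp_IZR; intros Hneg.
  apply nonneg_integer_nat; rewrite opp_IZR; lra.
Qed.

Lemma In_all_corners Rs y :
  In y (all_corners Rs) <-> exists r, In r Rs /\ In y (corners r).
Proof. unfold all_corners; rewrite nodup_In; apply in_flat_map. Qed.

Lemma mult_support Rs y : mult Rs y <> 0 -> In y (all_corners Rs).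
Proof.
  intros H; apply In_all_corners.
  induction Rs as [|r Rs IH]; [unfold mult in H; simpl in H; lra|].
  unfold mult in H; simpl in H.
  destruct (Req_EM_T (m_rect r y) 0) as [E|E].
  - destruct IH as [r' [Hr' Hy]]; [unfold mult; lra|].
    exists r'; simpl; auto.
  - exists r; split; [simpl; auto|]. unfold m_rect in E; unfold corners.
    repeat destruct (pt_eq_dec _ _); subst; simpl; auto; lra.
Qed.

Lemma all_corners_in_domain D Rs y :
  runion_ok D Rs -> In y (all_corners Rs) -> D y.
Proof.
  intros Hok Hy; apply In_all_corners in Hy as [r [Hr Hy]].
  unfold runion_ok in Hok; rewrite Forall_forall in Hok.
  destruct (Hok r Hr) as [_ [_ [H1 [H2 [H3 H4]]]]].
  simpl in Hy; destruct Hy as [<-|[<-|[<-|[<-|[]]]]]; auto.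
Qed.

Lemma all_corners_app_l R1 R2 : incl (all_corners R1) (all_corners (R1 ++ R2)).
Proof.
  intros y Hy; apply In_all_corners in Hy as [r [Hr Hy]].
  apply In_all_corners; exists r; split; auto; apply in_or_app; auto.
Qed.

Lemma all_corners_app_r R1 R2 : incl (all_corners R2) (all_corners (R1 ++ R2)).
Proof.
  intros y Hy; apply In_all_corners in Hy as [r [Hr Hy]].
  apply In_all_corners; exists r; split; auto; apply in_or_app; auto.
Qed.

Lemma all_corners_repeat_union n Rs :
  incl (all_corners (repeat_union n Rs)) (all_corners Rs).
Proof.
  induction n as [|n IH]; intros y Hy; simpl in Hy; [contradiction|].
  apply In_all_corners in Hy as [r [Hr Hy]]; apply in_app_or in Hr as [Hr|Hr].
  - apply In_all_corners; eauto.
  - apply IH, In_all_corners; eauto.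
Qed.

Lemma L_over A B Rs U : NoDup U -> incl (all_corners Rs) U ->
  L A B Rs = sum_over (Lterm A B Rs) U.
Proof.
  intros HU Hincl; unfold L; apply sum_over_support; auto.
  { apply NoDup_nodup. }
  intros y _ Hy; rewrite Lterm_corner_cost.
  destruct (Req_EM_T (mult Rs y) 0) as [E|E].
  - rewrite E; apply corner_cost_zero.
  - exfalso; apply Hy, mult_support; auto.
Qed.

Lemma L_repeat_union A B n Rs : L A B (repeat_union n Rs) = INR n * L A B Rs.
Proof.
  rewrite (L_over A B (repeat_union n Rs) (all_corners Rs))
    by (apply NoDup_nodup || apply all_corners_repeat_union).
  rewrite (L_over A B Rs (all_corners Rs)) by (apply NoDup_nodup || apply incl_refl).
  rewrite <- sum_over_scale; apply sum_over_ext; intros y _.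
  rewrite !Lterm_corner_cost, mult_repeat_union.
  apply corner_cost_scale, pos_INR.
Qed.

Lemma L_union_cancel D A B (Q1 : forall y, D y -> A y <= B y) R1 R2 x :
  runion_ok D (R1 ++ R2) -> 0 < mult R1 x -> mult R1 x + mult R2 x = 0 ->
  L A B (R1 ++ R2) <= L A B R1 + L A B R2 - (B x - A x) * mult R1 x.
Proof.
  intros Hok Hpos Hcancel.
  set (U := all_corners (R1 ++ R2)).
  assert (HU : NoDup U) by apply NoDup_nodup.
  assert (Hx : In x U) by (apply all_corners_app_l, mult_support; lra).
  set (saving := fun y => if pt_eq_dec y x then - ((B x - A x) * mult R1 x) else 0).
  rewrite (L_over A B (R1 ++ R2) U HU (incl_refl _)),
          (L_over A B R1 U HU (all_corners_app_l R1 R2)),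
          (L_over A B R2 U HU (all_corners_app_r R1 R2)).
  assert (Hsaving : sum_over saving U = - ((B x - A x) * mult R1 x))
    by (apply sum_over_indicator; auto).
  match goal with |- _ <= ?S1 + ?S2 - _ =>
    replace (S1 + S2 - (B x - A x) * mult R1 x) with (S1 + S2 + sum_over saving U)
      by (rewrite Hsaving; ring) end.
  rewrite <- !sum_over_add.
  apply sum_over_le; intros y Hy; rewrite !Lterm_corner_cost, mult_app.
  destruct (pt_eq_dec y x) as [->|Hne].
  - rewrite Hcancel, corner_cost_zero; unfold saving, corner_cost.
    destruct (pt_eq_dec x x) as [_|]; [|congruence].
    destruct (Rlt_dec 0 (mult R1 x)); [|lra].
    destruct (Rlt_dec 0 (mult R2 x)); [lra|].
    destruct (Rlt_dec (mult R2 x) 0); [|lra].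
    replace (mult R2 x) with (- mult R1 x) by lra; nra.
  - unfold saving; destruct (pt_eq_dec y x); [contradiction|].
    pose proof (corner_cost_subadditive (A y) (B y) (mult R1 y) (mult R2 y)
                  (Q1 y (all_corners_in_domain D _ y Hok Hy))); lra.
Qed.

(* Combine q copies of
   R1 with p copies of R2, where p = m_{R1}(x) and q = - m_{R2}(x). *)
Lemma pairwise_ratio_bound D A B (Q1 : forall y, D y -> A y <= B y)
  (Q2 : forall Rs : runion, runion_ok D Rs -> 0 <= L A B Rs) x R1 R2 :
  runion_ok D R1 -> 0 < mult R1 x -> runion_ok D R2 -> mult R2 x < 0 ->
  B x - A x <= L A B R1 / mult R1 x + L A B R2 / (- mult R2 x).
Proof.
  intros Hok1 Hpos Hok2 Hneg.
  destruct (positive_mult_nat R1 x Hpos) as [p Hp].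
  destruct (negative_mult_nat R2 x Hneg) as [q Hq].
  set (Rs1 := repeat_union q R1); set (Rs2 := repeat_union p R2).
  assert (Hok : runion_ok D (Rs1 ++ Rs2))
    by (apply Forall_app; split; apply repeat_union_ok; auto).
  assert (Hm1 : mult Rs1 x = INR q * INR p)
    by (unfold Rs1; rewrite mult_repeat_union, Hp; ring).
  assert (Hm2 : mult Rs2 x = - (INR p * INR q))
    by (unfold Rs2; rewrite mult_repeat_union, <- Hq; ring).
  assert (Hpq : 0 < INR p * INR q) by nra.
  pose proof (L_union_cancel D A B Q1 Rs1 Rs2 x Hok
                ltac:(lra) ltac:(lra)) as Hcancel.
  pose proof (Q2 _ Hok) as HL.
  rewrite Hm1 in Hcancel; unfold Rs1, Rs2 in Hcancel, HL.
  rewrite !L_repeat_union in Hcancel.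
  rewrite Hp, Hq.
  apply Rmult_le_reg_r with (r := INR p * INR q); auto.
  replace ((L A B R1 / INR p + L A B R2 / INR q) * (INR p * INR q))
    with (INR q * L A B R1 + INR p * L A B R2) by (field; nra).
  nra.
Qed.

(* Every set of reals has an infimum in the extended reals: +oo if empty,
   -oo if unbounded below, and otherwise minus the supremum of its negation
   (completeness of R). *)
Lemma is_inf_exists (S : R -> Prop) : exists l, is_inf S l.
Proof.
  destruct (classic (exists x, S x)) as [[x0 Hx0]|Hempty].
  2:{ exists PInf; split; [intros x Hx; exfalso; eauto|].
      intros [q| |] _; simpl; auto. }
  destruct (classic (exists r, forall x, S x -> r <= x)) as [[r Hr]|Hunb].
  - set (E := fun y => S (- y)).
    assert (HE : bound E) by (exists (- r); intros y Hy; apply Hr in Hy; lra).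
    assert (HE0 : exists y, E y)
      by (exists (- x0); unfold E; rewrite Ropp_involutive; auto).
    destruct (completeness E HE HE0) as [m [Hub Hlub]].
    exists (Fin (- m)); split.
    + intros x Hx; simpl.
      assert (E (- x)) as HEx by (unfold E; rewrite Ropp_involutive; auto).
      apply Hub in HEx; lra.
    + intros [q| |] Hq; simpl; auto.
      * assert (m <= - q); [|lra].
        apply Hlub; intros y Hy; apply Hq in Hy; simpl in Hy; lra.
      * exact (Hq x0 Hx0).
  - exists MInf; split; [intros; simpl; auto|].
    intros [q| |] Hq; simpl; auto.
    + apply Hunb; exists q; exact Hq.
    + exact (Hq x0 Hx0).
Qed.

Lemma Inf_spec S : is_inf S (Inf S).
Proof. unfold Inf; apply epsilon_spec, is_inf_exists. Qed.

Lemma Inf_ge S r : (forall x, S x -> r <= x) -> Rbar_le (Fin r) (Inf S).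
Proof. intros H; apply (proj2 (Inf_spec S)); exact H. Qed.

Lemma Inf_empty S : (forall x, ~ S x) -> Inf S = PInf.
Proof.
  intros Hempty.
  assert (Hge : forall r, Rbar_le (Fin r) (Inf S))
    by (intros r; apply Inf_ge; intros x Hx; exfalso; eapply Hempty; eauto).
  destruct (Inf S) as [q| |]; auto.
  - specialize (Hge (q + 1)); simpl in Hge; lra.
  - specialize (Hge 0); contradiction.
Qed.

Lemma Inf_plus_ge (SM SO : R -> Prop) c :
  (forall u v, SM u -> SO v -> c <= u + v) ->
  Rbar_le (Fin c) (Rbar_plus (Inf SM) (Inf SO)).
Proof.
  intros Hsum.
  destruct (classic (exists v, SO v)) as [[v Hv]|HO].
  2:{ rewrite (Inf_empty SO) by (intros x Hx; apply HO; eauto).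
      destruct (Inf SM); simpl; auto. }
  assert (HM : forall v, SO v -> Rbar_le (Fin (c - v)) (Inf SM)).
  { intros v' Hv'; apply Inf_ge; intros u Hu; pose proof (Hsum u v' Hu Hv'); lra. }
  pose proof (HM v Hv) as HMv.
  destruct (Inf SM) as [p| |]; simpl in HMv; [|simpl; auto|contradiction].
  assert (HO : Rbar_le (Fin (c - p)) (Inf SO)).
  { apply Inf_ge; intros v' Hv'; pose proof (HM v' Hv') as H; simpl in H; lra. }
  destruct (Inf SO) as [q| |]; simpl in *; auto; lra.
Qed.

Theorem mainTheorem12 (D : pt -> Prop) (A B : pt -> R)
  (hD : square_or_mesh D)
  (Q1 : forall y, D y -> A y <= B y)
  (Q2 : forall Rs : runion, runion_ok D Rs -> 0 <= L A B Rs) :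
  forall x : pt, D x ->
    Rbar_le (Fin (B x - A x)) (Rbar_plus (P_M D A B x) (P_O D A B x)).
Proof.
  intros x _; apply Inf_plus_ge.
  intros u v [R1 [Hok1 [Hpos ->]]] [R2 [Hok2 [Hneg ->]]].
  exact (pairwise_ratio_bound D A B Q1 Q2 x R1 R2 Hok1 Hpos Hok2 Hneg).
Qed.
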